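(* Let $A,B\subseteq[n]$ satisfy $A\subseteq B$, or $B\subseteq A$, or $A\cap B=\emptyset$. Then $[\Gamma_A,\Gamma_B]=0$.
   Context: Fix $n\ge1$ and real parameters $\mu_1,\dots,\mu_n>0$; write $[n]=\{1,\dots,n\}$. For $i\in[n]$, $r_i$ is the reflection $(r_if)(x)=f(x_1,\dots,-x_i,\dots,x_n)$ and $T_i=\partial_{x_i}+\frac{\mu_i}{x_i}(1-r_i)$. $\mathcal{C}\ell_n$ is generated by $e_1,\dots,e_n$ with $e_ie_j+e_je_i=-2\delta_{ij}$, $V$ is a fixed left $\mathcal{C}\ell_n$-module, and operators act on $\mathcal{P}(\mathbb{R}^n)\otimes V$ with $x_i,T_i,r_i$ acting on the polynomial factor and $e_i$ on $V$. For $A\subseteq[n]$: $\underline{D}_A=\sum_{i\in A}e_iT_i$, $\underline{x}_A=\sum_{i\in A}e_ix_i$, $\underline{S}_A=\frac12([\underline{x}_A,\underline{D}_A]-1)$, $\Gamma_A=\underline{S}_A\prod_{i\in A}r_i$ (empty sums $0$, empty products $1$). *)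

From HB Require Import structures.
From mathcomp Require Import all_boot all_order all_algebra.
Set Implicit Arguments. Unset Strict Implicit. Unset Printing Implicit Defensive.
Import Order.TTheory GRing.Theory Num.Theory.
Local Open Scope ring_scope.

(* Multi-indices alpha in N^n; an element of P(R^n) (x) V is represented by
   its coefficient map alpha |-> coefficient of x^alpha (in V), with finite
   support (see [is_poly]). *)
Definition midx (n : nat) := {ffun 'I_n -> nat}.
Definition PV (n : nat) (V : Type) := midx n -> V.

Definition is_poly (n : nat) (V : zmodType) (f : PV n V) : Prop :=
  exists s : seq (midx n), forall a, a \notin s -> f a = 0.

Definition incr n (i : 'I_n) (a : midx n) : midx n :=
  [ffun j => (a j + (j == i))%N].
Definition decr n (i : 'I_n) (a : midx n) : midx n :=
  [ffun j => (a j - (j == i))%N].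

Section Ops.
Variables (R : realFieldType) (V : lmodType R) (n : nat).

(* multiplication by x_i *)
Definition xop (i : 'I_n) (f : PV n V) : PV n V :=
  fun a => if (0 < a i)%N then f (decr i a) else 0.
(* reflection r_i : f(x) |-> f(x_1,..,-x_i,..,x_n) *)
Definition rop (i : 'I_n) (f : PV n V) : PV n V :=
  fun a => (-1) ^+ (a i) *: f a.
(* partial derivative d/dx_i *)
Definition dop (i : 'I_n) (f : PV n V) : PV n V :=
  fun a => (a i).+1%:R *: f (incr i a).
(* division by x_i (exact quotient on polynomials divisible by x_i,
   which is the case for (1 - r_i) f) *)
Definition divx (i : 'I_n) (g : PV n V) : PV n V :=
  fun a => g (incr i a).
(* Dunkl operator T_i = d_i + mu_i/x_i (1 - r_i) *)
Definition Top (mu : 'I_n -> R) (i : 'I_n) (f : PV n V) : PV n V :=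
  fun a => dop i f a + mu i *: divx i (fun b => f b - rop i f b) a.

Variable e : 'I_n -> {linear V -> V}.

Definition DA (mu : 'I_n -> R) (A : {set 'I_n}) (f : PV n V) : PV n V :=
  fun a => \sum_(i in A) e i (Top mu i f a).
Definition xA (A : {set 'I_n}) (f : PV n V) : PV n V :=
  fun a => \sum_(i in A) e i (xop i f a).
Definition SA (mu : 'I_n -> R) (A : {set 'I_n}) (f : PV n V) : PV n V :=
  fun a => 2^-1 *: (xA A (DA mu A f) a - DA mu A (xA A f) a - f a).
Definition rA (A : {set 'I_n}) (f : PV n V) : PV n V :=
  foldr (fun i g => rop i \o g) id (enum A) f.
Definition Gamma (mu : 'I_n -> R) (A : {set 'I_n}) (f : PV n V) : PV n V :=
  SA mu A (rA A f).
End Ops.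

From HB Require Import structures.
From mathcomp Require Import all_boot all_order all_algebra ring zify.
From Stdlib Require Import FunctionalExtensionality.
Set Implicit Arguments. Unset Strict Implicit. Unset Printing Implicit Defensive.
Import Order.TTheory GRing.Theory Num.Theory.
Local Open Scope ring_scope.

(* On coefficient maps, x_i and T_i act as weighted shifts of the
   multi-index and r_A acts diagonally, so operators attached to distinct
   indices commute, while [T_k, x_k^2] = 2 x_k and [x_k, T_k^2] = -2 T_k.
   With the Clifford relations this makes S_A anticommute with x_A and D_A;
   as r_A anticommutes with both too, Gamma_A commutes with x_A and D_A.
   For k outside A, the operators e_k x_k and e_k T_k commute with S_A
   (e_k anticommutes with every e_i, i in A) and with r_A, hence with
   Gamma_A.  So if A is contained in B or disjoint from it, Gamma_A commutes
   with x_B and D_B, hence with S_B; and r_B conjugates x_A and D_A by one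
   common sign, so it commutes with Gamma_A.  Therefore Gamma_A commutes
   with Gamma_B = S_B r_B. *)

Section Dunkl.
Variables (R : realFieldType) (V : lmodType R) (n : nat).
Local Notation PV := (PV n V).
Local Notation midx := (midx n).
Local Notation xop := (@xop R V n).

Lemma incrE i (a : midx) j : incr i a j = (a j + (j == i))%N.
Proof. by rewrite ffunE. Qed.
Lemma decrE i (a : midx) j : decr i a j = (a j - (j == i))%N.
Proof. by rewrite ffunE. Qed.
Lemma incr_id i (a : midx) : incr i a i = (a i).+1.
Proof. by rewrite incrE eqxx addn1. Qed.
Lemma decr_id i (a : midx) : decr i a i = (a i).-1.
Proof. by rewrite decrE eqxx subn1. Qed.
Lemma incr_neq i j (a : midx) : j != i -> incr i a j = a j.
Proof. by move=> h; rewrite incrE (negbTE h) addn0. Qed.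
Lemma decr_neq i j (a : midx) : j != i -> decr i a j = a j.
Proof. by move=> h; rewrite decrE (negbTE h) subn0. Qed.
Lemma decr_incr i (a : midx) : decr i (incr i a) = a.
Proof. by apply/ffunP=> j; rewrite decrE incrE; case: (j == i) => /=; lia. Qed.
Lemma incr_decr i (a : midx) : (0 < a i)%N -> incr i (decr i a) = a.
Proof. by move=> h; apply/ffunP=> j; rewrite incrE decrE; case: eqP => [->|] /=; lia. Qed.
Lemma incrC i j (a : midx) : incr i (incr j a) = incr j (incr i a).
Proof. by apply/ffunP=> k; rewrite !incrE; lia. Qed.
Lemma decrC i j (a : midx) : decr i (decr j a) = decr j (decr i a).
Proof. by apply/ffunP=> k; rewrite !decrE; lia. Qed.
Lemma incr_decrC i j (a : midx) : i != j -> incr i (decr j a) = decr j (incr i a).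
Proof.
move=> hij; apply/ffunP=> k; rewrite !ffunE.
by case: (eqVneq k i) => [->|_]; rewrite ?(negbTE hij) /=; lia.
Qed.

(* T_i x^alpha = dunkl_coef mu i (alpha_i - 1) x^(alpha - e_i). *)
Definition dunkl_coef (mu : 'I_n -> R) i (m : nat) : R :=
  m.+1%:R + mu i * (1 - (-1) ^+ m.+1).

Lemma dunkl_coef_step mu i m : dunkl_coef mu i m.+2 - dunkl_coef mu i m = 2.
Proof. by rewrite /dunkl_coef !exprS -[m.+3]addn2 -[m.+1]addn1 !natrD; ring. Qed.
Lemma dunkl_coef1 mu i : dunkl_coef mu i 1 = 2.
Proof. by rewrite /dunkl_coef !exprS expr0; ring. Qed.

Lemma TopE mu i (f : PV) a : Top mu i f a = dunkl_coef mu i (a i) *: f (incr i a).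
Proof.
rewrite /Top /dop /divx /rop /dunkl_coef incr_id.
by rewrite -[X in X - _]scale1r -scalerBl scalerA scalerDl.
Qed.

Definition refl_sign (A : {set 'I_n}) (a : midx) : R := (-1) ^+ (\sum_(i <- enum A) a i)%N.

Lemma rAE A (f : PV) a : rA A f a = refl_sign A a *: f a.
Proof.
rewrite /rA /refl_sign; elim: (enum A) => [|i s IH] /=; first by rewrite big_nil scale1r.
by rewrite /rop IH scalerA -exprD big_cons.
Qed.

Lemma refl_sign_incr A i (a : midx) :
  refl_sign A (incr i a) = (-1) ^+ (i \in A) * refl_sign A a.
Proof.
have sum_incr (s : seq 'I_n) :
    (\sum_(j <- s) incr i a j = \sum_(j <- s) a j + count_mem i s)%N.
  by elim: s => [|j s IH]; rewrite ?big_nil // !big_cons IH incrE /= addnACA.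
rewrite /refl_sign sum_incr exprD mulrC.
by rewrite (count_uniq_mem _ (enum_uniq _)) mem_enum.
Qed.

Lemma refl_sign_decr A i (a : midx) : (0 < a i)%N ->
  refl_sign A a = (-1) ^+ (i \in A) * refl_sign A (decr i a).
Proof. by move=> h; rewrite -refl_sign_incr incr_decr. Qed.

(* Such operators commute with every R-linear map of V, e.g. with the e_i. *)
Definition coef_op (X : PV -> PV) :=
  exists c : midx -> seq (R * midx),
    forall f (a : midx), X f a = \sum_(p <- c a) p.1 *: f p.2.

Lemma coef_op_xop i : coef_op (xop i).
Proof.
exists (fun a : midx => if (0 < a i)%N then [:: (1, decr i a)] else [::]) => f a.
by rewrite /xop; case: ifP => _; rewrite ?big_cons big_nil ?scale1r ?addr0.
Qed.
Lemma coef_op_Top mu i : coef_op (Top mu i).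
Proof.
exists (fun a : midx => [:: (dunkl_coef mu i (a i), incr i a)]) => f a.
by rewrite TopE big_cons big_nil addr0.
Qed.
Lemma coef_op_rA A : coef_op (rA A).
Proof.
exists (fun a : midx => [:: (refl_sign A a, a)]) => f a.
by rewrite rAE big_cons big_nil addr0.
Qed.

Section CoefOp.
Variable X : PV -> PV.
Hypothesis hX : coef_op X.

Lemma coef_opD f g : X (fun b => f b + g b) = fun a => X f a + X g a.
Proof.
case: hX => c hc; apply: functional_extensionality => a.
by rewrite !hc -big_split; apply: eq_bigr => p _; rewrite scalerDr.
Qed.
Lemma coef_opZ k f : X (fun b => k *: f b) = fun a => k *: X f a.
Proof.
case: hX => c hc; apply: functional_extensionality => a.
by rewrite !hc scaler_sumr; apply: eq_bigr => p _; rewrite !scalerA mulrC.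
Qed.
Lemma coef_op_sum (I : Type) (r : seq I) (P : pred I) (F : I -> PV) :
  X (fun b => \sum_(i <- r | P i) F i b) = fun a => \sum_(i <- r | P i) X (F i) a.
Proof.
case: hX => c hc; apply: functional_extensionality => a.
rewrite hc; under eq_bigr => p _ do rewrite scaler_sumr.
by rewrite exchange_big; apply: eq_bigr => i _; rewrite hc.
Qed.
Lemma coef_op_linear (L : {linear V -> V}) f :
  X (fun b => L (f b)) = fun a => L (X f a).
Proof.
case: hX => c hc; apply: functional_extensionality => a.
by rewrite !hc linear_sum; apply: eq_bigr => p _; rewrite linearZ.
Qed.
Lemma coef_op_linear_sum (I : Type) (r : seq I) (P : pred I)
    (L : I -> {linear V -> V}) (F : I -> PV) :
  X (fun b => \sum_(i <- r | P i) L i (F i b)) =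
  fun a => \sum_(i <- r | P i) L i (X (F i) a).
Proof.
rewrite coef_op_sum; apply: functional_extensionality => a; apply: eq_bigr => i _.
by rewrite coef_op_linear.
Qed.
End CoefOp.

Lemma xopC i j (f : PV) : xop i (xop j f) = xop j (xop i f).
Proof.
apply: functional_extensionality => a; rewrite /xop.
case: (eqVneq i j) => [->//|hij].
rewrite !decr_neq // 1?eq_sym // decrC.
by case: (0 < a i)%N; case: (0 < a j)%N.
Qed.

Lemma Top_xopC mu i j (f : PV) : i != j -> Top mu i (xop j f) = xop j (Top mu i f).
Proof.
move=> hij; apply: functional_extensionality => a; rewrite !TopE /xop.
rewrite incr_neq 1?eq_sym // TopE decr_neq //.
by case: ifP => _; rewrite ?scaler0 // incr_decrC.
Qed.

Lemma TopC mu i j (f : PV) : Top mu i (Top mu j f) = Top mu j (Top mu i f).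
Proof.
apply: functional_extensionality => a; rewrite !TopE.
case: (eqVneq i j) => [->//|hij].
by rewrite (incr_neq _ hij) (incr_neq _ _) 1?eq_sym // !scalerA mulrC incrC.
Qed.

Lemma Top_xop2 mu k (f : PV) a :
  Top mu k (xop k (xop k f)) a - xop k (xop k (Top mu k f)) a = 2 *: xop k f a.
Proof.
rewrite TopE {1}/xop incr_id /= decr_incr {1}/xop.
case: (posnP (a k)) => [ak0|ak_gt0]; first by rewrite /xop ak0 /= !scaler0 subr0.
rewrite /xop decr_id ak_gt0.
case: (ltnP 1 (a k)) => [ak_gt1|ak_le1].
  have -> : (0 < (a k).-1)%N by lia.
  rewrite TopE incr_decr; last by rewrite decr_id; lia.
  rewrite !decr_id -scalerBl; congr (_ *: _).
  by rewrite -(dunkl_coef_step mu k (a k).-1.-1); congr (dunkl_coef _ _ _ - _); lia.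
have -> : a k = 1%N by lia.
by rewrite /= dunkl_coef1 subr0.
Qed.

Lemma xop_Top2 mu k (f : PV) a :
  xop k (Top mu k (Top mu k f)) a - Top mu k (Top mu k (xop k f)) a =
  - 2 *: Top mu k f a.
Proof.
rewrite !TopE {1 2}/xop !incr_id /= !decr_incr !scalerA.
case: (posnP (a k)) => [ak0|ak_gt0].
  by rewrite ak0 /= dunkl_coef1 sub0r mulrC -scaleNr mulNr.
rewrite !TopE decr_id incr_decr // !scalerA -scalerBl; congr (_ *: _).
have := dunkl_coef_step mu k (a k).-1; rewrite prednK // => step.
have -> : dunkl_coef mu k (a k).+1 = dunkl_coef mu k (a k).-1 + 2 by rewrite -step; ring.
ring.
Qed.

Lemma sign_sqr (b : bool) : (-1) ^+ b * (-1) ^+ b = 1 :> R.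
Proof. by rewrite -signr_addb addbb. Qed.

Lemma rA_xop A i (f : PV) a : rA A (xop i f) a = (-1) ^+ (i \in A) *: xop i (rA A f) a.
Proof.
rewrite rAE /xop; case: ifP => ai_gt0; last by rewrite !scaler0.
by rewrite rAE scalerA (refl_sign_decr A ai_gt0).
Qed.

Lemma rA_Top mu A i (f : PV) a :
  rA A (Top mu i f) a = (-1) ^+ (i \in A) *: Top mu i (rA A f) a.
Proof.
rewrite rAE !TopE rAE !scalerA refl_sign_incr; congr (_ *: _).
by rewrite [RHS]mulrCA [_ * (_ * refl_sign A a)]mulrA sign_sqr mul1r mulrC.
Qed.

Lemma rAC A B (f : PV) : rA A (rA B f) = rA B (rA A f).
Proof. by apply: functional_extensionality => a; rewrite !rAE !scalerA mulrC. Qed.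

Definition op_linear (X : PV -> PV) :=
  (forall f g, X (fun b => f b + g b) = fun a => X f a + X g a) /\
  (forall (k : R) f, X (fun b => k *: f b) = fun a => k *: X f a).

Section OpLinear.
Variable X : PV -> PV.
Hypothesis hX : op_linear X.

Lemma op_linearD f g : X (fun b => f b + g b) = fun a => X f a + X g a.
Proof. exact: hX.1. Qed.
Lemma op_linearZ k f : X (fun b => k *: f b) = fun a => k *: X f a.
Proof. exact: hX.2. Qed.
Lemma op_linear0 : X (fun _ => 0) = fun _ => 0.
Proof.
have zero : (fun _ : midx => 0 : V) = (fun b => 0 *: (fun _ : midx => 0 : V) b).
  by apply: functional_extensionality => b; rewrite scale0r.
by rewrite {1}zero op_linearZ; apply: functional_extensionality => a; rewrite scale0r.
Qed.
Lemma op_linearN f : X (fun b => - f b) = fun a => - X f a.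
Proof.
have -> : (fun b => - f b) = (fun b => (-1) *: f b).
  by apply: functional_extensionality => b; rewrite scaleN1r.
by rewrite op_linearZ; apply: functional_extensionality => a; rewrite scaleN1r.
Qed.
Lemma op_linearB f g : X (fun b => f b - g b) = fun a => X f a - X g a.
Proof. by rewrite op_linearD op_linearN. Qed.
Lemma op_linearZBB (k : R) f g h :
  X (fun b => k *: (f b - g b - h b)) = fun a => k *: (X f a - X g a - X h a).
Proof. by rewrite (op_linearZ k (fun b => f b - g b - h b)) op_linearB op_linearB. Qed.
Lemma op_linear_sum (I : Type) (r : seq I) (P : pred I) (F : I -> PV) :
  X (fun b => \sum_(i <- r | P i) F i b) = fun a => \sum_(i <- r | P i) X (F i) a.
Proof.
elim: r => [|i r IH].
  have -> : (fun b => \sum_(i <- [::] | P i) F i b) = fun _ => 0.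
    by apply: functional_extensionality => b; rewrite big_nil.
  by rewrite op_linear0; apply: functional_extensionality => a; rewrite big_nil.
case Pi: (P i).
  have -> : (fun b => \sum_(j <- i :: r | P j) F j b) =
            (fun b => F i b + \sum_(j <- r | P j) F j b).
    by apply: functional_extensionality => b; rewrite big_cons Pi.
  by rewrite op_linearD IH; apply: functional_extensionality => a; rewrite big_cons Pi.
have -> : (fun b => \sum_(j <- i :: r | P j) F j b) = (fun b => \sum_(j <- r | P j) F j b).
  by apply: functional_extensionality => b; rewrite big_cons Pi.
by rewrite IH; apply: functional_extensionality => a; rewrite big_cons Pi.
Qed.
End OpLinear.

Lemma op_linear_coef_op X : coef_op X -> op_linear X.
Proof. by move=> hX; split=> [f g|k f]; [exact: coef_opD|exact: coef_opZ]. Qed.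

Lemma op_linear_comp X Y : op_linear X -> op_linear Y -> op_linear (fun f => X (Y f)).
Proof.
move=> hX hY; split=> [f g|k f].
  by rewrite (op_linearD hY) (op_linearD hX).
by rewrite (op_linearZ hY) (op_linearZ hX).
Qed.

Lemma double_inj (x y : V) : x + x = y + y -> x = y.
Proof.
rewrite -!mulr2n -!scaler_nat; apply: scalerI.
by rewrite pnatr_eq0.
Qed.

Section Clifford.
Variable mu : 'I_n -> R.
Variable e : 'I_n -> {linear V -> V}.
Hypothesis hcl : forall (i j : 'I_n) (v : V),
  e i (e j v) + e j (e i v) = - ((2 * (i == j)%N)%:R *: v).

Lemma e_anticomm i k v : i != k -> e k (e i v) = - e i (e k v).
Proof.
move=> hik; apply/eqP; rewrite -addr_eq0 hcl [k == i]eq_sym (negbTE hik).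
by rewrite muln0 scale0r oppr0.
Qed.

(* Symmetrising in (i, j), only the diagonal e_i e_i = -1 survives. *)
Lemma clifford_sum_sq (A : {set 'I_n}) (w : 'I_n -> 'I_n -> V)
    (hw : forall i j, w i j = w j i) :
  \sum_(i in A) e i (\sum_(j in A) e j (w i j)) = - \sum_(i in A) w i i.
Proof.
under eq_bigr => i _ do rewrite linear_sum.
set S := \sum_(i in A) _.
apply: double_inj; rewrite -opprD.
rewrite {2}/S exchange_big /S -!big_split -sumrN /=.
apply: eq_bigr => i iA; rewrite -big_split (bigD1 i) //= hcl eqxx muln1.
rewrite big1 ?addr0 => [|j /andP [_ hji]]; last first.
  by rewrite hw hcl eq_sym (negbTE hji) muln0 scale0r oppr0.
by rewrite scaler_nat mulr2n opprD.
Qed.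

Definition dirac (Q : 'I_n -> PV -> PV) (A : {set 'I_n}) (f : PV) : PV :=
  fun a => \sum_(i in A) e i (Q i f a).

Lemma xA_dirac A : xA e A = dirac xop A. Proof. by []. Qed.
Lemma DA_dirac A : DA e mu A = dirac (Top mu) A. Proof. by []. Qed.

Lemma op_linear_dirac Q A : (forall i, coef_op (Q i)) -> op_linear (dirac Q A).
Proof.
move=> hQ; split=> [f g|k f]; apply: functional_extensionality => a; rewrite /dirac.
  by rewrite -big_split; apply: eq_bigr => i _ /=; rewrite (coef_opD (hQ i)) linearD.
by rewrite scaler_sumr; apply: eq_bigr => i _ /=; rewrite (coef_opZ (hQ i)) linearZ.
Qed.

Lemma dirac_sq Q A (hQ : forall i, coef_op (Q i))
    (hC : forall i j f, Q i (Q j f) = Q j (Q i f)) f :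
  dirac Q A (dirac Q A f) = fun a => - \sum_(i in A) Q i (Q i f) a.
Proof.
apply: functional_extensionality => a; rewrite /dirac.
under eq_bigr => i _ do rewrite (coef_op_linear_sum (hQ i)).
by rewrite clifford_sum_sq // => i j; rewrite hC.
Qed.

Lemma dirac_comm_sum_sq Q1 Q2 Z A (c : R) (hQ1 : forall i, coef_op (Q1 i))
    (hQ2 : forall i, coef_op (Q2 i))
    (hC : forall k i f, i != k -> Q2 k (Q1 i (Q1 i f)) = Q1 i (Q1 i (Q2 k f)))
    (hcomm : forall k f a, Q2 k (Q1 k (Q1 k f)) a - Q1 k (Q1 k (Q2 k f)) a = c *: Z k f a)
    f a :
  dirac Q2 A (fun b => \sum_(i in A) Q1 i (Q1 i f) b) a
  - \sum_(i in A) Q1 i (Q1 i (dirac Q2 A f)) a = c *: dirac Z A f a.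
Proof.
rewrite /dirac.
under eq_bigr => k _ do rewrite (coef_op_sum (hQ2 k)).
under [X in _ - X]eq_bigr => i _ do rewrite !(coef_op_linear_sum (hQ1 i)).
rewrite [X in _ - X]exchange_big -sumrB scaler_sumr; apply: eq_bigr => k kA /=.
rewrite -linear_sum -linearB -linearZ /= -sumrB; congr (e k _).
rewrite (bigD1 k) //= hcomm big1 ?addr0 // => i /andP [_ hik].
by rewrite hC // subrr.
Qed.

Lemma op_linear_xA A : op_linear (xA e A).
Proof. by rewrite xA_dirac; apply: op_linear_dirac => i; apply: coef_op_xop. Qed.
Lemma op_linear_DA A : op_linear (DA e mu A).
Proof. by rewrite DA_dirac; apply: op_linear_dirac => i; apply: coef_op_Top. Qed.

Lemma op_linear_SA A : op_linear (SA e mu A).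
Proof.
have lx := op_linear_xA A; have lD := op_linear_DA A.
split=> [f g|k f]; apply: functional_extensionality => a; rewrite /SA.
  rewrite (op_linearD lD) (op_linearD lx) (op_linearD lx) (op_linearD lD) -scalerDr.
  by congr (_ *: _); rewrite !opprD (addrACA (xA e A _ a)) (addrACA (_ - _)).
rewrite (op_linearZ lD) (op_linearZ lx) (op_linearZ lx) (op_linearZ lD).
by rewrite -!scalerBr !scalerA mulrC.
Qed.

Lemma op_linear_Gamma A : op_linear (Gamma e mu A).
Proof. exact: op_linear_comp (op_linear_SA A) (op_linear_coef_op (coef_op_rA A)). Qed.

Lemma SA_commute A Y (s : R) (hY : op_linear Y) (hs : s * s = 1)
    (hx : forall f, Y (xA e A f) = fun a => s *: xA e A (Y f) a)
    (hD : forall f, Y (DA e mu A f) = fun a => s *: DA e mu A (Y f) a) f :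
  Y (SA e mu A f) = SA e mu A (Y f).
Proof.
rewrite /SA (op_linearZBB hY) hx hD hD hx; apply: functional_extensionality => a /=.
by rewrite (op_linearZ (op_linear_xA A)) (op_linearZ (op_linear_DA A)) !scalerA hs !scale1r.
Qed.

Lemma SA_xA_anticomm A f : SA e mu A (xA e A f) = fun a => - xA e A (SA e mu A f) a.
Proof.
have xA_sq g : xA e A (xA e A g) = fun a => - \sum_(i in A) xop i (xop i g) a.
  by rewrite xA_dirac dirac_sq //; [exact: coef_op_xop | exact: xopC].
have hC k i g : i != k -> Top mu k (xop i (xop i g)) = xop i (xop i (Top mu k g)).
  by move=> hik; rewrite !Top_xopC // eq_sym.
apply: functional_extensionality => a; rewrite /SA (op_linearZBB (op_linear_xA A)).
rewrite xA_sq /= xA_sq (op_linearN (op_linear_DA A)).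
have := dirac_comm_sum_sq A coef_op_xop (coef_op_Top mu) hC (Top_xop2 mu) f a.
rewrite -DA_dirac -xA_dirac => /eqP; rewrite subr_eq => /eqP ->.
rewrite -scalerN; congr (_ *: _).
set X := xA e A (DA e mu A (xA e A f)) a; set P := \sum_(i in A) _.
rewrite !opprD !opprK scaler_nat mulr2n.
apply/eqP; rewrite subr_eq; apply/eqP.
by rewrite -[RHS]addrA [RHS]addrC addrCA (addrC X P).
Qed.

Lemma SA_DA_anticomm A f : SA e mu A (DA e mu A f) = fun a => - DA e mu A (SA e mu A f) a.
Proof.
have DA_sq g : DA e mu A (DA e mu A g) = fun a => - \sum_(i in A) Top mu i (Top mu i g) a.
  by rewrite DA_dirac dirac_sq //; [exact: coef_op_Top | exact: TopC].
have hC k i g : i != k -> xop k (Top mu i (Top mu i g)) = Top mu i (Top mu i (xop k g)).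
  by move=> hik; rewrite !Top_xopC.
apply: functional_extensionality => a; rewrite /SA (op_linearZBB (op_linear_DA A)).
rewrite DA_sq /= DA_sq (op_linearN (op_linear_xA A)).
have := dirac_comm_sum_sq A (coef_op_Top mu) coef_op_xop hC (xop_Top2 mu) f a.
rewrite -DA_dirac -xA_dirac => /eqP; rewrite subr_eq => /eqP ->.
rewrite -scalerN; congr (_ *: _).
set Y := DA e mu A (xA e A (DA e mu A f)) a; set P := \sum_(i in A) _.
set D := DA e mu A f a.
rewrite scaleNr scaler_nat mulr2n !opprD !opprK.
rewrite (addrAC _ (-Y) (-D)) (addrAC _ (-P) (-D)) addrK.
by rewrite [LHS]addrC (addrC D) addrA.
Qed.

Section ReflectionSign.
Variables (A B : {set 'I_n}) (b : bool).
Hypothesis hb : {in A, forall i, (i \in B) = b}.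

Lemma rA_dirac (Q : 'I_n -> PV -> PV)
    (hQ : forall i f a, rA B (Q i f) a = (-1) ^+ (i \in B) *: Q i (rA B f) a) f :
  rA B (dirac Q A f) = fun a => (-1) ^+ b *: dirac Q A (rA B f) a.
Proof.
rewrite /dirac (coef_op_linear_sum (coef_op_rA B)); apply: functional_extensionality => a.
by rewrite scaler_sumr; apply: eq_bigr => i iA; rewrite hQ hb // linearZ.
Qed.

Lemma rA_xA f : rA B (xA e A f) = fun a => (-1) ^+ b *: xA e A (rA B f) a.
Proof. by rewrite xA_dirac; apply: rA_dirac => i g a; apply: rA_xop. Qed.
Lemma rA_DA f : rA B (DA e mu A f) = fun a => (-1) ^+ b *: DA e mu A (rA B f) a.
Proof. by rewrite DA_dirac; apply: rA_dirac => i g a; apply: rA_Top. Qed.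
End ReflectionSign.

Lemma Gamma_xA A f : Gamma e mu A (xA e A f) = xA e A (Gamma e mu A f).
Proof.
rewrite /Gamma (@rA_xA A A true) // expr1 (op_linearZ (op_linear_SA A)) SA_xA_anticomm.
by apply: functional_extensionality => a; rewrite scaleN1r opprK.
Qed.
Lemma Gamma_DA A f : Gamma e mu A (DA e mu A f) = DA e mu A (Gamma e mu A f).
Proof.
rewrite /Gamma (@rA_DA A A true) // expr1 (op_linearZ (op_linear_SA A)) SA_DA_anticomm.
by apply: functional_extensionality => a; rewrite scaleN1r opprK.
Qed.

Definition eop (k : 'I_n) (P : PV -> PV) (f : PV) : PV := fun a => e k (P f a).

Lemma op_linear_eop k P : coef_op P -> op_linear (eop k P).
Proof.
move=> hP; split=> [f g|c f]; rewrite /eop; apply: functional_extensionality => a.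
  by rewrite (coef_opD hP) linearD.
by rewrite (coef_opZ hP) linearZ.
Qed.

Lemma eop_dirac_anticomm (A : {set 'I_n}) k P Q (hP : coef_op P) (hQ : forall i, coef_op (Q i))
    (kA : k \notin A) (hC : forall i f, i \in A -> P (Q i f) = Q i (P f)) f :
  eop k P (dirac Q A f) = fun a => -1 *: dirac Q A (eop k P f) a.
Proof.
apply: functional_extensionality => a.
rewrite /eop /dirac (coef_op_linear_sum hP) linear_sum scaler_sumr.
apply: eq_bigr => i iA; rewrite (coef_op_linear (hQ i)) hC // e_anticomm ?scaleN1r //.
by apply: contraNneq kA => <-.
Qed.

Lemma Gamma_eop (A : {set 'I_n}) k P (kA : k \notin A) (hP : coef_op P)
    (hr : forall f a, rA A (P f) a = (-1) ^+ (k \in A) *: P (rA A f) a)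
    (hx : forall i f, i \in A -> P (xop i f) = xop i (P f))
    (hT : forall i f, i \in A -> P (Top mu i f) = Top mu i (P f)) f :
  Gamma e mu A (eop k P f) = eop k P (Gamma e mu A f).
Proof.
rewrite /Gamma.
have -> : rA A (eop k P f) = eop k P (rA A f).
  apply: functional_extensionality => a; rewrite /eop (coef_op_linear (coef_op_rA A)).
  by rewrite hr (negbTE kA) expr0 scale1r.
symmetry; apply: (@SA_commute _ _ (-1)).
- exact: op_linear_eop.
- by rewrite mulN1r opprK.
- by move=> g; rewrite xA_dirac; apply: eop_dirac_anticomm => //; apply: coef_op_xop.
- by move=> g; rewrite DA_dirac; apply: eop_dirac_anticomm => // i; apply: coef_op_Top.
Qed.

Lemma Gamma_eop_xop (A : {set 'I_n}) k (kA : k \notin A) f :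
  Gamma e mu A (eop k (xop k) f) = eop k (xop k) (Gamma e mu A f).
Proof.
apply: Gamma_eop => //; first exact: coef_op_xop.
- by move=> g a; rewrite rA_xop.
- by move=> i g _; rewrite xopC.
- by move=> i g iA; rewrite Top_xopC //; apply: contraNneq kA => <-.
Qed.

Lemma Gamma_eop_Top (A : {set 'I_n}) k (kA : k \notin A) f :
  Gamma e mu A (eop k (Top mu k) f) = eop k (Top mu k) (Gamma e mu A f).
Proof.
apply: Gamma_eop => //; first exact: coef_op_Top.
- by move=> g a; rewrite rA_Top.
- by move=> i g iA; rewrite Top_xopC //; apply: contraNneq kA => ->.
- by move=> i g _; rewrite TopC.
Qed.

Section CommonSign.
Variables A B : {set 'I_n}.
Hypothesis hAB : A \subset B \/ [disjoint A & B].

Lemma Gamma_dirac Q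
    (hin : forall f, Gamma e mu A (dirac Q A f) = dirac Q A (Gamma e mu A f))
    (hout : forall k f, k \notin A ->
       Gamma e mu A (eop k (Q k) f) = eop k (Q k) (Gamma e mu A f)) f :
  Gamma e mu A (dirac Q B f) = dirac Q B (Gamma e mu A f).
Proof.
have LG := op_linear_Gamma A.
have splitB g : dirac Q B g =
    fun a => dirac Q (B :&: A) g a + \sum_(i in B :\: A) eop i (Q i) g a.
  by apply: functional_extensionality => a; rewrite /dirac (big_setID A).
have hBA : Gamma e mu A (dirac Q (B :&: A) f) = dirac Q (B :&: A) (Gamma e mu A f).
  case: hAB => [sAB|dAB]; first by rewrite (setIidPr sAB).
  have dirac0 g : dirac Q set0 g = fun _ => 0.
    by apply: functional_extensionality => a; rewrite /dirac big_set0.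
  by rewrite setIC (disjoint_setI0 dAB) !dirac0 (op_linear0 LG).
rewrite splitB (op_linearD LG) hBA (op_linear_sum LG) [RHS]splitB.
apply: functional_extensionality => a; congr (_ + _).
by apply: eq_bigr => i; rewrite inE => /andP [iA _]; rewrite hout.
Qed.

Lemma Gamma_SA f : Gamma e mu A (SA e mu B f) = SA e mu B (Gamma e mu A f).
Proof.
have hx g : Gamma e mu A (xA e B g) = xA e B (Gamma e mu A g).
  rewrite xA_dirac; apply: Gamma_dirac => [h|k h kA].
    by rewrite -xA_dirac Gamma_xA.
  exact: Gamma_eop_xop.
have hD g : Gamma e mu A (DA e mu B g) = DA e mu B (Gamma e mu A g).
  rewrite DA_dirac; apply: Gamma_dirac => [h|k h kA].
    by rewrite -DA_dirac Gamma_DA.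
  exact: Gamma_eop_Top.
by rewrite /SA (op_linearZBB (op_linear_Gamma A)) hx hD hD hx.
Qed.

Lemma Gamma_rA f : Gamma e mu A (rA B f) = rA B (Gamma e mu A f).
Proof.
have [b hb] : exists b, {in A, forall i, (i \in B) = b}.
  case: hAB => [sAB|dAB]; first by exists true => i /(subsetP sAB).
  by exists false => i iA; rewrite (disjointFr dAB iA).
rewrite /Gamma rAC; symmetry; apply: (@SA_commute _ _ ((-1) ^+ b)).
- exact: op_linear_coef_op (coef_op_rA B).
- exact: sign_sqr.
- by move=> g; rewrite (rA_xA hb).
- by move=> g; rewrite (rA_DA hb).
Qed.

Lemma Gamma_comm f : Gamma e mu A (Gamma e mu B f) = Gamma e mu B (Gamma e mu A f).
Proof. by rewrite [in RHS]/Gamma -Gamma_rA -Gamma_SA. Qed.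

End CommonSign.
End Clifford.
End Dunkl.

Theorem lemma3 (R : realFieldType) (V : lmodType R) (n : nat) (hn : (1 <= n)%N)
  (mu : 'I_n -> R) (hmu : forall i, 0 < mu i)
  (e : 'I_n -> {linear V -> V})
  (hcl : forall (i j : 'I_n) (v : V),
      e i (e j v) + e j (e i v) = - ((2 * (i == j)%N)%:R *: v))
  (A B : {set 'I_n})
  (hAB : [\/ A \subset B, B \subset A | [disjoint A & B]])
  (f : PV n V) (hf : is_poly f) :
  Gamma e mu A (Gamma e mu B f) = Gamma e mu B (Gamma e mu A f).
Proof.
case: hAB => [sAB|sBA|dAB].
- by apply: Gamma_comm => //; left.
- by symmetry; apply: Gamma_comm => //; left.
- by apply: Gamma_comm => //; right.
Qed.
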